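(* Let $\mathcal{X}$ be a finite set and $\underline{Q}$ a lower transition rate operator on $\mathcal{L}(\mathcal{X})$. Then for all $f\in\mathcal{L}(\mathcal{X})$, $x\in\mathcal{X}$ and $t,s>0$: $\underline{T}_tf(x)>\min f$ if and only if $\underline{T}_sf(x)>\min f$.
   Context: $\mathcal{L}(\mathcal{X})$ is the set of real-valued functions on $\mathcal{X}$ with pointwise operations and order, real constants identified with constant functions, $\mathbb{I}_y$ the indicator of $\{y\}$. A lower transition rate operator is a map $\underline{Q}\colon\mathcal{L}(\mathcal{X})\to\mathcal{L}(\mathcal{X})$ such that for all $f,g$, $\lambda\ge0$, $\mu\in\mathbb{R}$, $x,y\in\mathcal{X}$: $\underline{Q}(\mu)=0$; $\underline{Q}(f+g)\ge\underline{Q}f+\underline{Q}g$; $\underline{Q}(\lambda f)=\lambda\underline{Q}f$; $x\ne y\Rightarrow\underline{Q}(\mathbb{I}_y)(x)\ge0$. For each $f$, $t\mapsto\underline{T}_tf$ is the unique solution on $[0,\infty)$ of $\frac{d}{dt}\underline{T}_tf=\underline{Q}\,\underline{T}_tf$ with $\underline{T}_0f=f$ (existence and uniqueness are known). *)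

From HB Require Import structures.
From mathcomp Require Import all_boot all_order all_algebra.
From mathcomp Require Import all_classical all_reals all_analysis.
Set Implicit Arguments. Unset Strict Implicit. Unset Printing Implicit Defensive.
Import Order.TTheory GRing.Theory Num.Theory.
Import numFieldNormedType.Exports.
Local Open Scope ring_scope.
Local Open Scope classical_set_scope.

Definition indic (R : realType) (X : finType) (y : X) : X -> R :=
  fun z => if z == y then 1 else 0.

Definition lower_rate_op (R : realType) (X : finType)
  (Q : (X -> R) -> (X -> R)) : Prop :=
  [/\ (forall mu : R, Q (fun _ => mu) = (fun _ => 0)),
      (forall f g x, Q f x + Q g x <= Q (fun z => f z + g z) x),
      (forall (lam : R) f, 0 <= lam -> Q (fun z => lam * f z) = (fun z => lam * Q f z))
    & (forall x y : X, x != y -> 0 <= Q (indic R y) x)].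

(* T : [0,oo) -> L(X) solves d/dt T_t = Q T_t on [0,oo) with T_0 = f
   (derivative taken componentwise; one-sided (right) derivative at 0). *)
Definition is_lower_semigroup_traj (R : realType) (X : finType)
  (Q : (X -> R) -> (X -> R)) (f : X -> R) (T : R -> X -> R) : Prop :=
  [/\ T 0 = f,
      (forall x, (fun h : R => h^-1 * (T h x - T 0 x)) @ 0^'+ --> Q (T 0) x)
    & (forall (t : R) x, 0 < t ->
         derivable (fun u : R => T u x) t 1 /\
         'D_1 (fun u : R => T u x) t = Q (T t) x)].

(* min f, with default value f x0 for the (nonempty) big min. *)
Definition fmin (R : realType) (X : finType) (f : X -> R) (x0 : X) : R :=
  \big[Order.min/f x0]_(y : X) f y.

(* A comparison argument for d/dt T_t = Q T_t, with c = min f.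
   First, T_t >= c: at a first zero of T_t - c + e (1 + t) the state is a
   minimum of T_t, where Q T_t >= 0 because off-diagonal rates are
   nonnegative.  Second, if T_t0 x > c then T_t x > c for t >= t0:
   superadditivity gives Q T_u x >= (T_u x - c) Q(I_x)(x), so T_u x - c stays
   above a decaying exponential.  Third, if T_u x = c for some u > 0 then
   T_t x = c for t >= u: on the set Z of states where T_u = c, the rate of T_v
   is <= 0 at a state maximising T_v over Z, so that maximum cannot increase
   above c.  Given the first step, the second and third are the two
   directions of the equivalence. *)

From Pilot Require Import Defs.
From HB Require Import structures.
From mathcomp Require Import all_boot all_order all_algebra.
From mathcomp Require Import all_classical all_reals all_analysis.
From mathcomp Require Import ring lra.
Import Order.TTheory GRing.Theory Num.Theory.
Import numFieldNormedType.Exports.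
Local Open Scope ring_scope.
Local Open Scope classical_set_scope.

Section Comparison.
Context {R : realType}.

Lemma derivable_cvg (f : R -> R) t : derivable f t 1 -> f @ t --> f t.
Proof. by move=> /derivable1_diffP /differentiable_continuous. Qed.

Lemma derive1_le0_left_min (f : R -> R) a c : a < c -> derivable f c 1 ->
  (forall t, a < t -> t < c -> f c <= f t) -> 'D_1 f c <= 0.
Proof.
move=> ac dfc cmin.
rewrite ['D_1 f c]cvg_at_leftE; last exact: dfc.
apply: limr_le.
  rewrite -(cvg_at_leftE (fun h => h^-1 *: ((f \o shift c) _ - f c))) //.
  apply: cvg_trans dfc; apply: cvg_app.
  move=> A [e egt0 Ae]; exists e => // x xe xgt0; apply: Ae => //.
  exact/ltr0_neq0.
near=> h; apply: mulr_le0_ge0.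
  by rewrite invr_le0; apply: ltW; near: h; exists 1 => /=.
rewrite subr_ge0 [_%:A]mulr1; apply: cmin; near: h.
  exists (c - a); first by rewrite /= subr_gt0.
  move=> h; rewrite /= distrC subr0.
  by move=> /ltr_normlP []; rewrite ltrBrDl ltrBlDl.
by exists 1 => //= h _ h0; rewrite gtrDr.
Unshelve. all: by end_near. Qed.

Lemma near_ball (a : R) (P : R -> Prop) : (\forall u \near a, P u) ->
  exists2 e : R, 0 < e & forall u, a - e < u -> u < a + e -> P u.
Proof.
move=> /nbhs_ballP [e e0 He]; exists e => // u au ue; apply: He => //.
by rewrite /ball /= ltr_distlC au ue.
Qed.

Lemma near_right_ball (a : R) (P : R -> Prop) : (\forall u \near a^'+, P u) ->
  exists2 e : R, 0 < e & forall u, a < u -> u < a + e -> P u.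
Proof.
move=> /near_ball [e e0 He]; exists e => // u au ue; apply: He => //.
by rewrite ltrBlDr (lt_le_trans au) // lerDl ltW.
Qed.

Context {X : finType}.
Implicit Types F : X -> R -> R.

Lemma first_zero_crossing F (a b : R) (x1 : X) :
  a < b -> (forall x, 0 < F x a) -> (forall x, F x @ a^'+ --> F x a) ->
  (forall x t, a < t -> F x @ t --> F x t) -> F x1 b <= 0 ->
  exists x tau, [/\ a < tau, F x tau = 0, (forall y, 0 <= F y tau)
                  & forall y u, a <= u -> u < tau -> 0 < F y u].
Proof.
move=> ab Fa Fa_cvg F_cvg Fb.
pose S := [set t | forall y u, a <= u -> u <= t -> 0 < F y u].
have Sa : S a by move=> y u au ua; rewrite (@le_anti _ _ u a) ?au ?ua.
have S_lt_b t : S t -> t < b.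
  by move=> St; rewrite ltNge; apply/negP => /(St x1 b (ltW ab)); rewrite ltNge Fb.
have S_ub : has_ubound S by exists b => t /S_lt_b /ltW.
have S_extend t (e : R) : S t -> 0 < e ->
    (forall y u, t < u -> u < t + e -> 0 < F y u) -> sup S < t + e / 2 -> False.
  move=> St e0 Fe; apply/negP; rewrite -leNgt; apply: ub_le_sup => // y u au ut.
  by case: (leP u t) => [|tu]; [exact: St | apply: Fe => //; lra].
set tau := sup S.
have pos_before y u : a <= u -> u < tau -> 0 < F y u.
  by move=> au /(sup_gt (ex_intro _ a Sa)) [t St ut]; apply: St => //; exact: ltW.
have a_lt_tau : a < tau.
  have : \forall u \near a^'+, forall y, 0 < F y u.
    by apply: filter_forall => y; exact: cvgr_gt _ (Fa_cvg y) _ (Fa y).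
  case/near_right_ball => e e0 Fe; rewrite ltNge; apply/negP => taua.
  apply: (S_extend a e) => //; last by rewrite -/tau; lra.
  by move=> y u au ue; exact: Fe.
have F_tau_cvg y : F y @ tau --> F y tau by exact: F_cvg.
have F_tau_ge0 y : 0 <= F y tau.
  rewrite leNgt; apply/negP => Fneg.
  have [e e0 Fe] := @near_ball tau _ (cvgr_lt _ (F_tau_cvg y) 0 Fneg).
  have [u [au ut Fu]] : exists u, [/\ a <= u, u < tau & F y u < 0].
    have [u [au ut ue]] : exists u, [/\ a <= u, u < tau & tau - e < u].
      by case: (leP e (tau - a)) => ?; [exists (tau - e / 2) | exists ((a + tau) / 2)];
        split; lra.
    by exists u; split => //; apply: Fe => //; lra.
  by have := pos_before y u au ut; lra.
have [x Fx0] : exists x, F x tau = 0.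
  apply: contrapT => Fneq0.
  have Fgt0 y : 0 < F y tau.
    by rewrite lt_neqAle F_tau_ge0 andbT eq_sym; apply/eqP => h; apply: Fneq0; exists y.
  have : \forall u \near tau, forall y, 0 < F y u.
    exact: (@filter_forall R X (fun y u => 0 < F y u) _ _
                           (fun y => cvgr_gt _ (F_tau_cvg y) _ (Fgt0 y))).
  case/(@near_ball tau) => e e0 Fe; apply: (S_extend tau e).
  - move=> y u au ut; case: (ltP u tau) => [|taut]; first exact: pos_before.
    by have -> : u = tau by apply: le_anti; rewrite ut.
  - by [].
  - by move=> y u ? ?; apply: Fe => //; lra.
  - rewrite -/tau; lra.
by exists x, tau.
Qed.

Lemma positivity_barrier F (a : R) :
  (forall x, 0 < F x a) -> (forall x, F x @ a^'+ --> F x a) ->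
  (forall x t, a < t -> derivable (F x) t 1) ->
  (forall x t, a < t -> (forall y, 0 <= F y t) -> F x t = 0 -> 0 < 'D_1 (F x) t) ->
  forall x t, a <= t -> 0 < F x t.
Proof.
move=> Fa Fa_cvg Fder Fcross x t; rewrite le_eqVlt => /predU1P [<-|a_t]; first exact: Fa.
rewrite ltNge; apply/negP => Ft.
have F_cvg y u : a < u -> F y @ u --> F y u by move=> au; exact/derivable_cvg/Fder.
have [y [tau [atau Fy0 Fge0 Fpos]]] := @first_zero_crossing F a t x a_t Fa Fa_cvg F_cvg Ft.
suff : 'D_1 (F y) tau <= 0 by have := Fcross y tau atau Fge0 Fy0; lra.
apply: (derive1_le0_left_min _ _ _ atau (Fder y tau atau)) => u au ut.
by rewrite Fy0; apply/ltW/Fpos => //; exact: ltW.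
Qed.

End Comparison.

Section Derivatives.
Context {R : realType}.

Lemma is_derive_scale_affine (g : R -> R) (t dg k a b : R) : is_derive t 1 g dg ->
  is_derive t 1 (fun u => k * g u + (a + b * u)) (k * dg + b).
Proof.
move=> g_der.
have := is_deriveD (is_deriveZ k g_der)
  (is_deriveD (is_derive_cst a t 1) (is_deriveZ b (is_derive_id t 1))).
by rewrite add0r [b *: 1]mulr1.
Qed.

Lemma is_derive_expR_comp (h : R -> R) (t dh : R) : is_derive t 1 h dh ->
  is_derive t 1 (fun u => expR (h u)) (dh * expR (h t)).
Proof.
move=> h_der; have h_dif : derivable h t 1 by exact: ex_derive.
apply: DeriveDef.
  apply/derivable1_diffP; apply: (differentiable_comp (g := expR)).
    exact/derivable1_diffP.
  exact/derivable1_diffP/derivable_expR.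
rewrite -derive1E (derive1_comp (g := expR) h_dif); last exact: derivable_expR.
rewrite !derive1E.
have -> : 'D_1 h t = dh by exact: derive_val.
by rewrite derive_val mulrC.
Qed.

End Derivatives.

Section LowerRateOperator.
Context {R : realType} {X : finType} {Q : (X -> R) -> X -> R}.
Hypothesis HQ : lower_rate_op Q.
Implicit Types (g h : X -> R) (x y : X).

Lemma lower_rate_cst (c : R) : Q (fun _ => c) = (fun _ => 0).
Proof. by case: HQ. Qed.

Lemma lower_rate_superadd g h x : Q g x + Q h x <= Q (fun z => g z + h z) x.
Proof. by case: HQ. Qed.

Lemma lower_rate_homo (k : R) g : 0 <= k -> Q (fun z => k * g z) = (fun z => k * Q g z).
Proof. by case: HQ => _ _ homo _; exact: homo. Qed.

Lemma lower_rate_indic_ge0 x y : x != y -> 0 <= Q (Defs.indic R y) x.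
Proof. by case: HQ => _ _ _ offdiag; exact: offdiag. Qed.

Lemma lower_rate_addr_cst g (c : R) : Q (fun z => g z + c) = Q g.
Proof.
apply/funext => x; apply/eqP; rewrite eq_le; apply/andP; split.
  have := lower_rate_superadd (fun z => g z + c) (fun _ => - c) x.
  rewrite lower_rate_cst addr0.
  by have -> : (fun z => g z + c - c) = g by apply/funext => z; rewrite addrK.
by have := lower_rate_superadd g (fun _ => c) x; rewrite lower_rate_cst addr0.
Qed.

Lemma lower_rate_sum_indic (s : seq X) (k : X -> R) x : (forall y, 0 <= k y) ->
  \sum_(y <- s) k y * Q (Defs.indic R y) x <=
  Q (fun z => \sum_(y <- s) k y * Defs.indic R y z) x.
Proof.
move=> k_ge0; elim: s => [|y s IHs].
  have -> : (fun z => \sum_(y <- [::]) k y * Defs.indic R y z) = (fun _ => 0).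
    by apply/funext => z; rewrite big_nil.
  by rewrite big_nil lower_rate_cst.
have -> : (fun z => \sum_(w <- y :: s) k w * Defs.indic R w z) =
    (fun z => k y * Defs.indic R y z + \sum_(w <- s) k w * Defs.indic R w z).
  by apply/funext => z; rewrite big_cons.
rewrite big_cons.
apply: le_trans (lower_rate_superadd (fun z => k y * Defs.indic R y z) _ x).
by rewrite (lower_rate_homo _ _ (k_ge0 y)) lerD2l.
Qed.

Lemma lower_rate_ge0_at_zero g x : (forall z, 0 <= g z) -> g x = 0 -> 0 <= Q g x.
Proof.
move=> g_ge0 gx0.
pose k y := if y == x then 0 else g y.
have k_ge0 y : 0 <= k y by rewrite /k; case: eqP.
have -> : g = (fun z => \sum_(y <- index_enum X) k y * Defs.indic R y z).
  apply/funext => z; rewrite (bigD1 z) //= big1 ?addr0.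
    by rewrite /Defs.indic eqxx mulr1 /k; case: eqP => [->|].
  by move=> y /negbTE yz; rewrite /Defs.indic eq_sym yz mulr0.
apply: (le_trans _ (lower_rate_sum_indic _ _ x k_ge0)); apply: sumr_ge0 => y _.
rewrite /k; case: eqP => [_|/eqP yx]; first by rewrite mul0r.
by apply: mulr_ge0 => //; apply: lower_rate_indic_ge0; rewrite eq_sym.
Qed.

Lemma lower_rate_ge_diag g x : (forall z, 0 <= g z) ->
  g x * Q (Defs.indic R x) x <= Q g x.
Proof.
move=> g_ge0; set gx := g x.
pose h z := g z - gx * Defs.indic R x z.
have h_ge0 z : 0 <= h z.
  rewrite /h /Defs.indic; case: eqP => [->|_]; first by rewrite mulr1 subrr.
  by rewrite mulr0 subr0.
have hx0 : h x = 0 by rewrite /h /Defs.indic eqxx mulr1 subrr.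
have -> : g = (fun z => h z + gx * Defs.indic R x z) by apply/funext => z; rewrite subrK.
apply: le_trans (lower_rate_superadd _ _ x).
by rewrite (lower_rate_homo _ _ (g_ge0 x)) lerDr; exact: lower_rate_ge0_at_zero.
Qed.

Lemma lower_rate_le0_dominated g h y :
  (forall z, 0 <= g z) -> (forall z, 0 <= h z) -> (forall z, g z = 0 -> h z = 0) ->
  g y = 0 -> Q g y <= 0 -> Q h y <= 0.
Proof.
move=> g_ge0 h_ge0 h_vanish gy0 Qgy.
(* On a finite state space h <= C g, and C g - h is nonnegative with a zero at y. *)
pose C := \sum_(z | g z != 0) h z / g z.
have C_ge0 : 0 <= C by apply: sumr_ge0 => z _; exact: divr_ge0.
pose k z := C * g z - h z.
have k_ge0 z : 0 <= k z.
  rewrite /k subr_ge0; have [gz0|gz_neq0] := eqVneq (g z) 0.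
    by rewrite gz0 mulr0 h_vanish.
  have : h z / g z <= C.
    by rewrite /C (bigD1 z) //= lerDl; apply: sumr_ge0 => v _; exact: divr_ge0.
  by move=> /(ler_wpM2r (g_ge0 z)); rewrite divfK.
have ky0 : k y = 0 by rewrite /k gy0 mulr0 h_vanish // subrr.
have := lower_rate_superadd k h y.
under eq_fun do rewrite subrK.
rewrite lower_rate_homo // => Qkh.
have := lower_rate_ge0_at_zero _ _ k_ge0 ky0.
have := mulr_ge0_le0 C_ge0 Qgy.
lra.
Qed.

End LowerRateOperator.

Section Trajectory.
Context {R : realType} {X : finType} {Q : (X -> R) -> X -> R}.
Context {f : X -> R} {T : R -> X -> R}.
Hypotheses (HQ : lower_rate_op Q) (HT : is_lower_semigroup_traj Q f T).
Context {c : R}.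
Hypothesis c_le_f : forall z, c <= f z.

Lemma traj0 : T 0 = f.
Proof. by case: HT. Qed.

Lemma traj_is_derive (z : X) (t : R) : 0 < t -> is_derive t 1 (fun u => T u z) (Q (T t) z).
Proof. by move=> t_gt0; case: HT => _ _ /(_ t z t_gt0) [? ?]; exact: DeriveDef. Qed.

Lemma traj_cvg0 (z : X) : (fun h => T h z) @ 0^'+ --> T 0 z.
Proof.
case: HT => _ /(_ z) rate_cvg _.
have : (fun h : R => h * (h^-1 * (T h z - T 0 z))) @ 0^'+ --> 0 * Q (T 0) z.
  by apply: cvgM => //; apply: cvg_at_right_filter; exact: cvg_id.
rewrite mul0r => incr_cvg.
have : (fun h => T h z - T 0 z) @ 0^'+ --> 0.
  by apply: cvg_trans incr_cvg; apply: near_eq_cvg; near=> h; rewrite mulVKf.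
move=> /cvgD /(_ (cvg_cst (T 0 z))); rewrite add0r.
by apply: cvg_trans; apply: near_eq_cvg; near=> h; rewrite /= subrK.
Unshelve. all: by end_near. Qed.

Lemma traj_ge_lb (t : R) (z : X) : 0 <= t -> c <= T t z.
Proof.
move=> t_ge0; apply/ler_addgt0Pr => e e_gt0.
pose ep := e / (1 + t).
have ep_gt0 : 0 < ep by apply: divr_gt0 => //; lra.
have ep_t : ep + ep * t = e.
  by rewrite -{1}[ep]mulr1 -mulrDr /ep divfK //; apply: lt0r_neq0; lra.
pose F w u := 1 * T u w + ((- c + ep) + ep * u).
have F_der (w : X) (u : R) : 0 < u -> is_derive u 1 (F w) (1 * Q (T u) w + ep).
  by move=> u_gt0; exact/is_derive_scale_affine/traj_is_derive.
suff : 0 < F z t by rewrite /F; lra.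
apply: (positivity_barrier F 0 _ _ _ _ z t t_ge0) => [w|w|w u u_gt0|w u u_gt0 F_ge0 Fw0].
- by rewrite /F traj0 mulr0 addr0 mul1r; have := c_le_f w; lra.
- apply: cvgD; first by apply: cvgM; [exact: cvg_cst | exact: traj_cvg0].
  apply: cvgD; first exact: cvg_cst.
  by apply: cvgM; [exact: cvg_cst | apply: cvg_at_right_filter; exact: cvg_id].
- exact/ex_derive/F_der.
- have := F_der w u u_gt0 => F_der_u; rewrite derive_val.
  suff : 0 <= Q (T u) w by lra.
  rewrite -(lower_rate_addr_cst HQ (T u) (- T u w)).
  apply: (lower_rate_ge0_at_zero HQ); last by rewrite subrr.
  by move=> v; move: (F_ge0 v) Fw0; rewrite /F !mul1r; lra.
Qed.

Lemma traj_rate_le0_at_lb (u : R) (y : X) : 0 < u -> T u y = c -> Q (T u) y <= 0.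
Proof.
move=> u_gt0 Tuy.
have T_der := traj_is_derive y u u_gt0.
rewrite -(_ : 'D_1 (fun v => T v y) u = Q (T u) y); last exact: derive_val.
apply: (derive1_le0_left_min _ _ _ u_gt0) => [|v v_gt0 _]; first exact: ex_derive.
by rewrite /= Tuy; apply: traj_ge_lb; exact: ltW.
Qed.

Lemma traj_gt_lb_persists (z : X) (t0 t : R) :
  0 < t0 -> t0 <= t -> c < T t0 z -> c < T t z.
Proof.
move=> t0_gt0 t0_le_t c_lt_Tt0.
set k := Q (Defs.indic R z) z.
set al := (T t0 z - c) / 2.
have al_gt0 : 0 < al by rewrite /al; lra.
pose E u := expR ((k - 1) * (u - t0)).
pose F (_ : X) u := T u z - c - al * E u.
have F_der (w : X) (u : R) : 0 < u -> is_derive u 1 (F w) (Q (T u) z - 0 - al * ((k - 1) * E u)).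
  move=> u_gt0; apply: is_deriveB; first exact: is_deriveB (traj_is_derive z u u_gt0) _.
  apply: is_deriveZ; rewrite /E -[X in X * _](mulr1 (k - 1)) -[X in _ * X * _]subr0.
  by apply: is_derive_expR_comp; apply: is_deriveZ; exact: is_deriveB.
suff : 0 < F z t by have := expR_gt0 ((k - 1) * (t - t0)); rewrite /F /E; nra.
apply: (positivity_barrier F t0 _ _ _ _ z t t0_le_t) => [w|w|w u|w u t0_lt_u F_ge0 Fw0].
- by rewrite /F /E subrr mulr0 expR0 mulr1 /al; lra.
- apply: cvg_at_right_filter; exact/derivable_cvg/ex_derive/F_der.
- by move=> t0_lt_u; apply/ex_derive/F_der; lra.
- have u_gt0 : 0 < u by lra.
  have := F_der w u u_gt0 => F_der_u; rewrite derive_val.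
  have Eu_gt0 : 0 < E u by exact: expR_gt0.
  have Tu_eq : T u z - c = al * E u by move: Fw0; rewrite /F; lra.
  have : (T u z - c) * k <= Q (T u) z.
    rewrite -(lower_rate_addr_cst HQ (T u) (- c)); apply: (lower_rate_ge_diag HQ) => v.
    by have := traj_ge_lb u v (ltW u_gt0); lra.
  rewrite Tu_eq; have : 0 < al * E u by exact: mulr_gt0.
  have -> : al * ((k - 1) * E u) = al * E u * k - al * E u by ring.
  lra.
Qed.

Lemma traj_rate_le0_on_lb_set (u v : R) (w : X) : 0 < u -> 0 < v -> T u w = c ->
  (forall y, T u y = c -> T v y <= T v w) -> Q (T v) w <= 0.
Proof.
move=> u_gt0 v_gt0 Tuw Tv_le.
(* T_v - c + (m - b) = a + m, where a vanishes wherever T_u = c and m - b >= 0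
   vanishes at w. *)
pose m := T v w - c.
pose a y := if T u y == c then 0 else T v y - c.
pose b y := if T u y == c then T v y - c else 0.
have Tv_ge y : c <= T v y by exact: traj_ge_lb (ltW v_gt0).
have Qa : Q a w <= 0.
  apply: (lower_rate_le0_dominated HQ (fun y => T u y - c)) => [y|y|y||].
  - by have := traj_ge_lb u y (ltW u_gt0); lra.
  - by rewrite /a; case: ifP => // _; have := Tv_ge y; lra.
  - by rewrite /a => /eqP; rewrite subr_eq0 => ->.
  - by rewrite Tuw subrr.
  - by rewrite lower_rate_addr_cst //; exact: traj_rate_le0_at_lb.
have Qmb : 0 <= Q (fun y => m - b y) w.
  apply: (lower_rate_ge0_at_zero HQ); last by rewrite /b Tuw eqxx subrr.
  move=> y; rewrite /b /m subr_ge0; case: ifP => [/eqP/Tv_le|_]; first lra.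
  by have := Tv_ge w; lra.
have := lower_rate_superadd HQ (fun y => T v y - c) (fun y => m - b y) w.
have -> : (fun y => T v y - c + (m - b y)) = (fun y => a y + m).
  by apply/funext => y; rewrite /a /b; case: ifP => _; rewrite ?subr0; lra.
rewrite !lower_rate_addr_cst //; lra.
Qed.

Lemma traj_eq_lb_persists (u t : R) (z : X) : 0 < u -> u <= t -> T u z = c -> T t z = c.
Proof.
move=> u_gt0 u_le_t Tuz.
apply/eqP; rewrite eq_le traj_ge_lb ?andbT; last by apply: ltW; exact: lt_le_trans u_le_t.
apply/ler_addgt0Pr => e e_gt0.
pose ep := e / (1 + t - u).
have ep_gt0 : 0 < ep by apply: divr_gt0 => //; lra.
have ep_t : ep * (1 + t - u) = e by rewrite /ep divfK //; apply: lt0r_neq0; lra.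
pose F y := if T u y == c then fun v => -1 * T v y + (ep - ep * u + c + ep * v) else cst ep.
have F_der y (v : R) : 0 < v -> T u y = c ->
    is_derive v 1 (F y) (-1 * Q (T v) y + ep).
  by move=> v_gt0 Tuy; rewrite /F Tuy eqxx; exact/is_derive_scale_affine/traj_is_derive.
suff : 0 < F z t by rewrite /F Tuz eqxx; lra.
apply: (positivity_barrier F u _ _ _ _ z t u_le_t) => [y|y|y v u_lt_v|y v u_lt_v F_ge0].
- by rewrite /F; case: ifP => [/eqP ->|//]; lra.
- have [Tuy|/negbTE Tuy] := eqVneq (T u y) c; last by rewrite /F Tuy; exact: cvg_cst.
  apply: cvg_at_right_filter; exact/derivable_cvg/ex_derive/F_der.
- have [Tuy|/negbTE Tuy] := eqVneq (T u y) c; last by rewrite /F Tuy; exact: derivable_cst.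
  by apply/ex_derive/F_der => //; lra.
- have [Tuy Fy0|/negbTE Tuy] := eqVneq (T u y) c; last by rewrite /F Tuy /cst; lra.
  have v_gt0 : 0 < v by lra.
  have := F_der y v v_gt0 Tuy => F_der_v; rewrite derive_val.
  suff : Q (T v) y <= 0 by lra.
  apply: (traj_rate_le0_on_lb_set _ _ _ u_gt0 v_gt0 Tuy) => y' Tuy'.
  by move: (F_ge0 y') Fy0; rewrite /F Tuy Tuy' eqxx; lra.
Qed.

Lemma traj_gt_lb_transfer (z : X) (t s : R) : 0 < t -> 0 < s -> c < T t z -> c < T s z.
Proof.
move=> t_gt0 s_gt0 c_lt_Ttz; have [t_le_s|s_lt_t] := leP t s.
  exact: (traj_gt_lb_persists _ _ _ t_gt0 t_le_s c_lt_Ttz).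
rewrite lt_neqAle traj_ge_lb ?andbT; last exact: ltW.
apply/eqP => /esym/(traj_eq_lb_persists _ _ _ s_gt0 (ltW s_lt_t)); lra.
Qed.

End Trajectory.

Theorem lemma7 (R : realType) (X : finType) (Q : (X -> R) -> (X -> R))
  (f : X -> R) (T : R -> X -> R) :
  lower_rate_op Q -> is_lower_semigroup_traj Q f T ->
  forall (x : X) (t s : R), 0 < t -> 0 < s ->
    (fmin f x < T t x <-> fmin f x < T s x).
Proof.
move=> HQ HT x t s t_gt0 s_gt0.
have min_le_f z : fmin f x <= f z by exact: bigmin_le.
by split; apply: (traj_gt_lb_transfer HQ HT min_le_f).
Qed.
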